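(* Let $p$ be a prime. There is no finite $p$-group $G$ of order at most $p^6$ such that $Z(G)$ is not contained in $G'$, $G$ has nilpotency class at least $3$, and $Z(\mathrm{Inn}(G))=\mathrm{Aut}_c^{Z}(G)<\mathrm{Aut}_c(G)$ (i.e., $\mathrm{Aut}_c^{Z}(G)$ equals $Z(\mathrm{Inn}(G))$ and is a proper subgroup of $\mathrm{Aut}_c(G)$).
   Context: $G'$ is the commutator subgroup and $Z(G)$ the center of $G$. $\mathrm{Inn}(G)$ is the group of inner automorphisms of $G$. An automorphism $\alpha$ of $G$ is central if $x^{-1}\alpha(x)\in Z(G)$ for all $x\in G$; $\mathrm{Aut}_c(G)$ denotes the group of all central automorphisms of $G$, and $\mathrm{Aut}_c^{Z}(G)$ the subgroup of central automorphisms fixing every element of $Z(G)$. *)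

From mathcomp Require Import all_boot all_fingroup all_solvable.
Set Implicit Arguments. Unset Strict Implicit. Unset Printing Implicit Defensive.
Local Open Scope group_scope.

Definition Inn (gT : finGroupType) (G : {group gT}) : {set {perm gT}} :=
  conj_aut G @* G.

Definition Autc (gT : finGroupType) (G : {group gT}) : {set {perm gT}} :=
  [set a in Aut G | [forall x in G, x^-1 * a x \in 'Z(G)]].

Definition AutcZ (gT : finGroupType) (G : {group gT}) : {set {perm gT}} :=
  [set a in Autc G | [forall z in 'Z(G), a z == z]].

From mathcomp Require Import all_boot all_fingroup all_solvable.
From mathcomp Require Import zify.

Set Implicit Arguments.
Unset Strict Implicit.
Unset Printing Implicit Defensive.

Local Open Scope group_scope.

(* Since AutcZ(G) <= Z(Inn G) <= Inn G, every homomorphism phi from G to Z(G)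
   that is trivial on Z(G) is a commutator map y |-> [y, x], because
   y |-> y phi(y) is a central automorphism fixing Z(G).  Take w of order p in
   G' :&: Z(G).  Every maximal subgroup M containing Z(G) is the kernel of a
   homomorphism onto <w>, hence M = C_G(x) for some x in Z_2(G) with
   [G, x] <= <w>.  As G/Z_2(G) is not cyclic, two such maximal subgroups contain
   Z_2(G); their x's, together with |G| <= p^6 and |Z(G)| >= p^2, force
   |Z(G)| = p^2, |Z_2(G)| = p^4, Z_2(G) abelian and [Z_2(G), G] <= <w>.  Then
   |G'| <= p^2, so Z_2(G) is not contained in N = G' Z(G), which has order at
   most p^3.  On the other hand Z_2(G) lies in every maximal subgroup containing
   Z(G), and G/N is elementary abelian (otherwise a homomorphism from G/N onto
   a cyclic subgroup of Z(G) not contained in G' would be a commutator map), so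
   N is the intersection of the maximal subgroups containing it and Z_2(G) <= N. *)

Section Quotients.

Variable gT : finGroupType.
Implicit Types (G H K M : {group gT}) (x : gT).

Lemma noncyclic_quotient_notin_join G H a :
  H <| G -> ~~ cyclic (G / H) -> a \in G -> exists2 b, b \in G & b \notin <[a]> <*> H.
Proof.
move=> /andP[_ nHG] ncycGH Ga; apply/subsetPn; apply: contra ncycGH => sGaH.
have nHa : a \in 'N(H) := subsetP nHG a Ga.
have := quotientS H sGaH; rewrite quotientYidr ?quotient_cycle ?cycle_subG //.
by move/cyclicS; apply; apply: cycle_cyclic.
Qed.

Lemma noncyclic_quotient_two_maximal G H :
    H <| G -> ~~ cyclic (G / H) ->
  exists M1 M2 : {group gT},
    [/\ maximal M1 G, maximal M2 G, H \subset M1 :&: M2 & M1 :!=: M2].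
Proof.
move=> nsHG ncycGH; have sHG := normal_sub nsHG.
have [a Ga aH] := noncyclic_quotient_notin_join nsHG ncycGH (group1 G).
rewrite cycle1 joing1G in aH.
have [defH | [M1 maxM1 sHM1]] := maximal_exists sHG; first by rewrite defH Ga in aH.
have /properP[sM1G [g Gg gM1]] := maxgroupp maxM1.
have [b Gb bgH] := noncyclic_quotient_notin_join nsHG ncycGH Gg.
have sgHG : <[g]> <*> H \subset G by rewrite join_subG cycle_subG Gg sHG.
have [defgH | [M2 maxM2 sgHM2]] := maximal_exists sgHG; first by rewrite defgH Gb in bgH.
exists M1, M2; split=> //; first by rewrite subsetI sHM1 (subset_trans (joing_subr _ _) sgHM2).
apply: contraNneq gM1 => ->.
by rewrite (subsetP sgHM2) // (subsetP (joing_subl _ _)) ?cycle_id.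
Qed.

Lemma ucn2_quotient_noncyclic G : 2 < nil_class G -> ~~ cyclic (G / 'Z_2(G)).
Proof.
apply: contraL => cycG; rewrite -leqNgt nil_class2.
have sZZ2 : 'Z(G) \subset 'Z_2(G) by rewrite -ucn1 ucn_sub_geq.
have isoG := third_isog sZZ2 (center_normal G) (ucn_normal 2 G).
have defZ2 : 'Z_2(G) / 'Z(G) = 'Z(G / 'Z(G)) by rewrite -ucn1 ucn_central.
have abGZ : abelian (G / 'Z(G)).
  by apply: cyclic_center_factor_abelian; rewrite -defZ2 (isog_cyclic isoG).
exact: der1_min (normal_norm (center_normal G)) abGZ.
Qed.

Lemma mem_ucn2 G x : x \in G -> {in G, forall y, [~ y, x] \in 'Z(G)} -> x \in 'Z_2(G).
Proof.
move=> Gx Zx; rewrite ucnSnR inE Gx ucn1 /= gen_subG.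
by apply/subsetP=> _ /imset2P[_ y /set1P-> Gy ->]; rewrite -invg_comm groupV Zx.
Qed.

Lemma quotient_cycle_cent G H x :
  G \subset 'N(H) -> x \in G -> {in G, forall y, [~ y, x] \in H} ->
  <[x]> / H \subset 'C(G / H).
Proof.
move=> nHG Gx Hx; rewrite quotient_cycle ?(subsetP nHG) // cycle_subG.
apply/centP=> _ /morphimP[y Ny Gy ->]; apply/commgP.
by rewrite -morphR ?(subsetP nHG) //= coset_id // -invg_comm groupV Hx.
Qed.

Lemma sub_maximal_abelem_quotient (p : nat) G H K :
    p.-group G -> H <| G -> p.-abelem (G / H) -> K \subset G ->
    (forall M : {group gT}, maximal M G -> H \subset M -> K \subset M) ->
  K \subset H.
Proof.
move=> pG nsHG abelGH sKG sKmax; have nHG := normal_norm nsHG.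
rewrite -(quotient_sub1 (subset_trans sKG nHG)).
have /eqP <- : 'Phi(G / H) == 1 by rewrite (trivg_Phi (quotient_pgroup H pG)).
apply/bigcapsP=> Q /predU1P[-> | maxQ]; first exact: quotientS.
have maxM : maximal (coset H @*^-1 Q) G.
  by rewrite -(quotientGK nsHG) cosetpre_maximal.
by rewrite -(cosetpreK Q) quotientS // sKmax // sub_cosetpre.
Qed.

End Quotients.

Section PGroupOrder.

Variables (gT : finGroupType) (p : nat).
Hypothesis p_pr : prime p.
Implicit Types (G H K Q Y : {group gT}) (x : gT).

Lemma logn_subG H K : H \subset K -> logn p #|H| <= logn p #|K|.
Proof. by move=> sHK; apply: dvdn_leq_log (cardSg sHK). Qed.

Lemma eq_pgroup_logn H K :
  p.-group K -> H \subset K -> logn p #|K| <= logn p #|H| -> H :=: K.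
Proof.
move=> pK sHK leKH; apply/eqP; rewrite eqEcard sHK (card_pgroup pK).
by rewrite (card_pgroup (pgroupS sHK pK)) leq_exp2l ?prime_gt1.
Qed.

Lemma logn_join_cycle H x :
  p.-group (<[x]> <*> H) -> x \notin H -> logn p #|H| < logn p #|<[x]> <*> H|.
Proof.
move=> pxH xH; rewrite ltnNge; apply: contra xH => le_xH_H.
rewrite (eq_pgroup_logn pxH (joing_subr _ _) le_xH_H).
by rewrite mem_gen // inE cycle_id.
Qed.

Lemma logn_card_quotient G H :
  H <| G -> logn p #|G| = logn p #|H| + logn p #|G / H|.
Proof.
case/andP=> sHG nHG.
by rewrite card_quotient // -lognM ?cardG_gt0 ?indexg_gt0 // Lagrange.
Qed.

Lemma logn_noncyclic_pgroup G : p.-group G -> ~~ cyclic G -> 1 < logn p #|G|.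
Proof.
move=> pG; rewrite ltnNge; apply: contraNN => le_G1.
move: (card_pgroup pG); case: (logn p #|G|) le_G1 => [|[|]] // _ cardG.
  by rewrite (card1_trivg cardG) cyclic1.
by rewrite prime_cyclic // cardG expn1.
Qed.

Lemma noncyclic_p2group_exponent G :
  p.-group G -> logn p #|G| <= 2 -> ~~ cyclic G -> exponent G %| p.
Proof.
move=> pG le_G2 ncycG; have [x Gx ->] := exponent_witness (pgroup_nil pG).
have px : p.-group <[x]> := mem_p_elt pG Gx.
have lt_x2 : logn p #[x] < 2.
  rewrite ltnNge; apply: contra ncycG => le2x; apply/cyclicP; exists x.
  by rewrite (eq_pgroup_logn pG) ?cycle_subG // (leq_trans le_G2).
rewrite [#[x]](card_pgroup px); move: lt_x2.
by case: (logn p #[x]) => [|[|]] //= _; rewrite ?dvd1n ?expn1.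
Qed.

Lemma noncyclic_p2quotient_generators Q Y :
    p.-group Q -> Y <| Q -> logn p #|Q / Y| <= 2 -> ~~ cyclic (Q / Y) ->
  exists a b, [/\ a \in Q, b \in Q & <[a]> <*> <[b]> <*> Y = Q].
Proof.
move=> pQ nsYQ le_QY2 ncycQY.
have [a Qa aY] := noncyclic_quotient_notin_join nsYQ ncycQY (group1 Q).
rewrite cycle1 joing1G in aY.
have [b Qb bY] := noncyclic_quotient_notin_join nsYQ ncycQY Qa.
exists a, b; split=> //; rewrite (joingC <[a]>) -joingA.
have sQ : <[b]> <*> (<[a]> <*> Y) \subset Q.
  by rewrite !join_subG !cycle_subG Qa Qb normal_sub.
have ltYa := logn_join_cycle (pgroupS (joing_subr <[b]> _) (pgroupS sQ pQ)) aY.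
have ltab := logn_join_cycle (pgroupS sQ pQ) bY.
apply: (eq_pgroup_logn pQ sQ); rewrite (logn_card_quotient nsYQ).
apply: leq_trans (leq_add (leqnn _) le_QY2) _.
by apply: leq_trans ltab; rewrite addn2 ltnS.
Qed.

End PGroupOrder.

Lemma logn_der1_central_noncyclic_quotient (gT : finGroupType) (p : nat)
    (Q Y : {group gT}) :
    prime p -> p.-group Q -> Y \subset 'Z(Q) ->
    logn p #|Q / Y| <= 2 -> ~~ cyclic (Q / Y) ->
  logn p #|Q^`(1)| <= 1.
Proof.
move=> p_pr pQ sYZ le_QY2 ncycQY.
have [_ cYQ] := subsetIP sYZ; have nsYQ := sub_center_normal sYZ.
have nYQ := normal_norm nsYQ.
have powY a : a \in Q -> a ^+ p \in Y.
  move=> Qa; apply: coset_idr; first by rewrite groupX ?(subsetP nYQ).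
  rewrite morphX ?(subsetP nYQ) //; apply/eqP; rewrite -order_dvdn.
  apply: dvdn_trans (dvdn_exponent (mem_quotient Y Qa)) _.
  exact: (noncyclic_p2group_exponent p_pr (quotient_pgroup Y pQ) le_QY2 ncycQY).
have [a [b [Qa Qb defQ]]] := noncyclic_p2quotient_generators p_pr pQ nsYQ le_QY2 ncycQY.
pose R := (<[a]> <*> <[b]>)%G.
have sRQ : R \subset Q by rewrite join_subG !cycle_subG Qa Qb.
have cYR : Y \subset 'C(R) := subset_trans cYQ (centS sRQ).
have defRY : R \* Y = Q by rewrite cprodE // -cent_joinEr.
have := der_cprod 1 defRY; rewrite (derG1P (abelianS sYZ (center_abelian Q))).
rewrite cprodg1 => <-.
have abQY : abelian (Q / Y).
  apply: (@card_p2group_abelian _ p) => //; rewrite (card_pgroup (quotient_pgroup Y pQ)).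
  by congr (p ^ _)%N; apply/eqP; rewrite eqn_leq le_QY2 logn_noncyclic_pgroup ?quotient_pgroup.
have Zab : [~ a, b] \in 'Z(Q).
  by rewrite (subsetP sYZ) // (subsetP (der1_min nYQ abQY)) // mem_commg.
have cRab : [~ a, b] \in 'C(R) := subsetP (centS sRQ) _ (subsetP (subsetIr _ _) _ Zab).
rewrite (der1_joing_cycles cRab) -orderE.
apply: leq_trans (_ : logn p p <= 1); last by rewrite logn_prime ?eqxx.
apply: dvdn_leq_log (prime_gt0 p_pr) _; rewrite order_dvdn.
rewrite -commXg; last exact: (centerC Qa Zab).
by apply/commgP/esym/(centerC Qb); rewrite (subsetP sYZ) ?powY.
Qed.

Section CentralAutomorphisms.

Variables (gT : finGroupType) (G : {group gT}) (phi : gT -> gT).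
Hypotheses (phiM : {in G &, {morph phi : x y / x * y}})
           (phiZ : {in G, forall y, phi y \in 'Z(G)})
           (phi1 : {in 'Z(G), forall z, phi z = 1}).

Lemma central_hom_AutcZ : exists2 a, a \in AutcZ G & {in G, forall y, a y = y * phi y}.
Proof.
have sZG := center_sub G.
have phiG y : y \in G -> phi y \in G by move/phiZ/(subsetP sZG).
pose f y := y * phi y.
have phif : {in G, forall y, phi (f y) = phi y}.
  by move=> y Gy; rewrite /f phiM ?phiG // (phi1 (phiZ Gy)) mulg1.
have injf : {in G &, injective f}.
  move=> y1 y2 Gy1 Gy2 eqf; have := congr1 phi eqf.
  by rewrite !phif // => eqphi; apply: (mulIg (phi y1)); rewrite {2}eqphi.
have sfG : f @: G \subset G.
  by apply/subsetP=> _ /imsetP[y Gy ->]; rewrite groupM ?phiG.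
pose a := perm_in injf sfG.
have aE : {in G, forall y, a y = f y} by move=> y Gy; rewrite perm_inE.
exists a => //; rewrite !inE perm_in_on /= -andbA; apply/and3P; split.
- apply/morphicP=> x y Gx Gy.
  rewrite !aE ?groupM // /f phiM // -!mulgA; congr (_ * _).
  by rewrite !mulgA; congr (_ * _); exact: (centerC Gy (phiZ Gx)).
- by apply/forall_inP=> y Gy; rewrite aE // mulKg phiZ.
- by apply/forall_inP=> z Zz; rewrite aE ?(subsetP sZG) // /f phi1 ?mulg1.
Qed.

Lemma AutcZ_inner_commg :
  AutcZ G \subset Inn G -> exists2 x, x \in G & {in G, forall y, [~ y, x] = phi y}.
Proof.
move=> sAI; have [a AutcZa aE] := central_hom_AutcZ.
have /morphimP[x _ Gx ax] := subsetP sAI a AutcZa.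
by exists x => // y Gy; rewrite commgEl -(conj_autE Gx Gy) -ax aE // mulKg.
Qed.

End CentralAutomorphisms.

Section Homomorphisms.

Variables (gT : finGroupType) (p : nat).
Hypothesis p_pr : prime p.

Lemma maximal_kernel_hom (G M : {group gT}) w :
    p.-group G -> maximal M G -> #[w] = p ->
  exists phi : gT -> gT, [/\ {in G &, {morph phi : x y / x * y}},
     {in G, forall y, phi y \in <[w]>} & {in G, forall y, (phi y == 1) = (y \in M)}].
Proof.
move=> pG maxM ow; have nsMG := p_maximal_normal pG maxM.
have nMG := normal_norm nsMG.
have /properP[sMG [g Gg gM]] := maxgroupp maxM.
have GMg : coset M g \in G / M := mem_quotient M Gg.
have cardGM : #|G / M| = p by rewrite card_quotient // (p_maximal_index pG).
have gM1 : coset M g != 1.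
  by apply: contra gM => /eqP; apply: coset_idr; apply: subsetP nMG g Gg.
have ogM : #[coset M g] = p.
  by apply/(prime_nt_dvdP p_pr); rewrite ?order_eq1 // -cardGM order_dvdG.
have defGM : G / M = <[coset M g]>.
  by apply/eqP; rewrite eq_sym eqEcard cycle_subG GMg -orderE ogM cardGM /=.
have dvd_w : #[w] %| #[coset M g] by rewrite ogM ow.
have injw : 'injm (eltm dvd_w) by rewrite injm_eltm ogM ow.
have GMy y : y \in G -> coset M y \in <[coset M g]> by move=> Gy; rewrite -defGM mem_quotient.
exists (fun y => eltm dvd_w (coset M y)); split.
- by move=> x y Gx Gy /=; rewrite morphM ?(subsetP nMG) // morphM ?GMy.
- by move=> y /GMy/cycleP[i ->]; rewrite eltmE mem_cycle.
move=> y Gy /=; rewrite (morph_injm_eq1 injw (GMy y Gy)).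
apply/eqP/idP=> [/coset_idr-> // | My]; first exact: subsetP nMG y Gy.
exact: coset_id.
Qed.

Lemma abelian_exponent_hom (hT : finGroupType) (H : {group hT}) h (z : gT) :
    abelian H -> h \in H -> #[h] = exponent H -> #[z] %| #[h] ->
  exists2 psi : {morphism H >-> gT}, psi h = z & psi @* H \subset <[z]>.
Proof.
move=> cHH Hh oh dvd_z.
have /splitsP[K /complP[tiK defH]] := abelian_splits Hh oh cHH.
have sKH : K \subset H by rewrite -defH mulG_subr.
have cK : K \subset 'C(<[h]>).
  by rewrite centsC (subset_trans _ (centS sKH)) // cycle_subG (subsetP cHH).
have defhK : <[h]> \x K = H by rewrite dprodE.
have cf : (trivm K : hT -> gT) @* K \subset 'C(eltm dvd_z @* <[h]>).
  by rewrite morphim_trivm sub1G.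
exists (dprodm defhK cf); first exact: etrans (dprodmEl defhK cf (cycle_id h)) (eltm_id dvd_z).
by rewrite im_dprodm morphim_trivm mulg1 im_eltm.
Qed.

End Homomorphisms.

Section InnerCentralAutomorphisms.

Variables (gT : finGroupType) (G : {group gT}) (p : nat) (w : gT).
Hypotheses (p_pr : prime p) (pG : p.-group G) (cardG : #|G| <= p ^ 6).
Hypotheses (nsubZG' : ~~ ('Z(G) \subset G^`(1))) (class3 : 2 < nil_class G).
Hypothesis AutcZ_inner : AutcZ G \subset Inn G.
Hypotheses (w_G'Z : w \in G^`(1) :&: 'Z(G)) (ow : #[w] = p).

Lemma der1_center_nontrivial : G^`(1) :&: 'Z(G) != 1.
Proof.
apply: meet_center_nil (pgroup_nil pG) (der_normal 1 G) _.
apply: contraTneq class3 => /derG1P abG.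
by rewrite -leqNgt (leq_trans _ (isT : 1 <= 2)) // nil_class1.
Qed.

Lemma logn_der1_center : 0 < logn p #|G^`(1) :&: 'Z(G)| < logn p #|'Z(G)|.
Proof.
have pZ : p.-group 'Z(G) := pgroupS (center_sub G) pG.
apply/andP; split.
  have [_ _ [m ->]] := pgroup_pdiv (pgroupS (subsetIr _ _) pZ) der1_center_nontrivial.
  by rewrite pfactorK.
rewrite ltnNge; apply: contra nsubZG' => leZD.
by rewrite -(eq_pgroup_logn p_pr pZ (subsetIr _ _) leZD) subsetIl.
Qed.

Lemma logn_card_le6 : logn p #|G| <= 6.
Proof. by rewrite -(leq_exp2l _ _ (prime_gt1 p_pr)) -card_pgroup. Qed.

Lemma ucn2_witness (M : {group gT}) :
    maximal M G -> 'Z(G) \subset M ->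
  exists2 x, x \in 'Z_2(G) & 'C_G[x] = M /\ {in G, forall y, [~ y, x] \in <[w]>}.
Proof.
move=> maxM sZM; have sMG := proper_sub (maxgroupp maxM).
have [phi [phiM phiW phiK]] := maximal_kernel_hom p_pr pG maxM ow.
have sWZ : <[w]> \subset 'Z(G) by rewrite cycle_subG; case/setIP: w_G'Z.
have phiZ : {in G, forall y, phi y \in 'Z(G)} by move=> y /phiW/(subsetP sWZ).
have phi1 : {in 'Z(G), forall z, phi z = 1}.
  by move=> z Zz; apply/eqP; rewrite phiK ?(subsetP sZM) ?(subsetP (center_sub G)).
have [x Gx commx] := AutcZ_inner_commg phiM phiZ phi1 AutcZ_inner.
exists x; first by apply: mem_ucn2 Gx _ => y Gy; rewrite commx ?phiZ.
split; last by move=> y Gy; rewrite commx ?phiW.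
apply/setP=> y; rewrite inE; have [Gy | Gy] /= := boolP (y \in G).
  by rewrite (sameP cent1P commgP) commx ?phiK.
by apply/esym/negP=> /(subsetP sMG); apply/negP.
Qed.

Lemma ucn2_witnesses :
  exists x1 x2, let A := <[x2]> <*> (<[x1]> <*> 'Z(G)) in
  [/\ x1 \notin 'Z(G), x2 \notin <[x1]> <*> 'Z(G),
      A \subset 'Z_2(G) :&: 'C('Z_2(G)) & A / <[w]> \subset 'C(G / <[w]>)].
Proof.
have [M1 [M2 [maxM1 maxM2 sZ2M12 neM12]]] :=
  noncyclic_quotient_two_maximal (ucn_normal 2 G) (ucn2_quotient_noncyclic class3).
have [sZ2M1 sZ2M2] := subsetIP sZ2M12.
have sM1G := proper_sub (maxgroupp maxM1).
have sZZ2 : 'Z(G) \subset 'Z_2(G) by rewrite -ucn1 ucn_sub_geq.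
have [x1 Z2x1 [defM1 Wx1]] := ucn2_witness maxM1 (subset_trans sZZ2 sZ2M1).
have [x2 Z2x2 [defM2 Wx2]] := ucn2_witness maxM2 (subset_trans sZZ2 sZ2M2).
have cMx M x : 'C_G[x] = M -> x \in 'C(M) by move=> <-; rewrite -sub_cent1 subsetIr.
have cZ (M : {set gT}) : M \subset G -> 'Z(G) \subset 'C(M).
  by move=> sMG; rewrite (subset_trans (subsetIr _ _)) ?centS.
have cM1x1Z : <[x1]> <*> 'Z(G) \subset 'C(M1) by rewrite join_subG cycle_subG cMx ?cZ.
have [Gx1 Gx2] := (subsetP (ucn_sub 2 G) x1 Z2x1, subsetP (ucn_sub 2 G) x2 Z2x2).
exists x1, x2; split.
- apply: contraL (maxgroupp maxM1) => Zx1; rewrite properE -defM1 subsetI subxx.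
  by rewrite sub_cent1 (subsetP (subsetIr _ _) _ Zx1) andbF.
- apply: contra neM12 => /(subsetP cM1x1Z) cM1x2.
  have sM12 : M1 \subset M2 by rewrite -defM2 subsetI sM1G sub_cent1.
  by rewrite ((maxgroupP maxM1).2 M2 (maxgroupp maxM2) sM12).
- rewrite subsetI !join_subG !cycle_subG Z2x1 Z2x2 sZZ2 cZ ?ucn_sub //= !andbT.
  apply/andP; split; first exact: subsetP (centS sZ2M2) _ (cMx _ _ defM2).
  exact: subsetP (centS sZ2M1) _ (cMx _ _ defM1).
have nWG : G \subset 'N(<[w]>).
  by rewrite normal_norm // sub_center_normal // cycle_subG; case/setIP: w_G'Z.
have nWZ := subset_trans (center_sub G) nWG.
rewrite !quotientY ?join_subG ?cycle_subG ?(subsetP nWG) ?nWZ //.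
rewrite (quotient_cycle_cent nWG Gx2 Wx2) (quotient_cycle_cent nWG Gx1 Wx1).
by rewrite quotient_cents ?subsetIr.
Qed.

Lemma ucn2_structure :
  [/\ logn p #|'Z(G)| = 2, logn p #|'Z_2(G)| = 4, abelian 'Z_2(G)
    & 'Z_2(G) / <[w]> \subset 'Z(G / <[w]>)].
Proof.
have [x1 [x2 [x1Z x2A1 sAZ2C cAW]]] := ucn2_witnesses.
set A := <[x2]> <*> _ in sAZ2C cAW; have [sAZ2 cAZ2] := subsetIP sAZ2C.
have sZ2G := ucn_sub 2 G; have pZ2 := pgroupS sZ2G pG.
have /andP[lt0D ltDZ] := logn_der1_center.
have ltZA1 := logn_join_cycle p_pr (pgroupS (joing_subr _ _) (pgroupS sAZ2 pZ2)) x1Z.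
have ltA1A := logn_join_cycle p_pr (pgroupS sAZ2 pZ2) x2A1.
have leAZ2 := logn_subG p sAZ2.
have leZ2G : logn p #|'Z_2(G)| + 2 <= logn p #|G|.
  rewrite (logn_card_quotient p (ucn_normal 2 G)) leq_add2l.
  exact: logn_noncyclic_pgroup (quotient_pgroup _ pG) (ucn2_quotient_noncyclic class3).
have leG6 := logn_card_le6.
have [eqZ eqZ2 leZ2A] :
    [/\ logn p #|'Z(G)| = 2, logn p #|'Z_2(G)| = 4 & logn p #|'Z_2(G)| <= logn p #|A|].
  move: lt0D ltDZ ltZA1 ltA1A leAZ2 leZ2G leG6.
  set lD := logn p #|G^`(1) :&: 'Z(G)|; set lZ := logn p #|'Z(G)|.
  set lA1 := logn p #|<[x1]> <*> 'Z(G)|.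
  set lA := logn p #|A|; set lZ2 := logn p #|'Z_2(G)|; set lG := logn p #|G|.
  by clearbody lD lZ lA1 lA lZ2 lG; clear -lD lZ lA1 lA lZ2 lG; split; lia.
have defZ2 : A :=: 'Z_2(G) := eq_pgroup_logn p_pr pZ2 sAZ2 leZ2A.
split=> //; first by rewrite /abelian -{1}defZ2.
by rewrite subsetI quotientS // -defZ2.
Qed.

Lemma logn_der1_le2 : logn p #|G^`(1)| <= 2.
Proof.
have [_ eqZ2 _ sZ2W] := ucn2_structure.
have [G'w Zw] := setIP w_G'Z.
have sWZ : <[w]> \subset 'Z(G) by rewrite cycle_subG.
have nsWG := sub_center_normal sWZ.
have sWZ2 : <[w]> \subset 'Z_2(G) by rewrite (subset_trans sWZ) // -ucn1 ucn_sub_geq.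
have isoQ := third_isog sWZ2 nsWG (ucn_normal 2 G).
have leG'W : logn p #|(G / <[w]>)^`(1)| <= 1.
  apply: logn_der1_central_noncyclic_quotient p_pr (quotient_pgroup _ pG) sZ2W _ _.
    rewrite (card_isog isoQ) -(leq_add2l 4) -{1}eqZ2 -logn_card_quotient ?ucn_normal //.
    exact: logn_card_le6.
  by rewrite (isog_cyclic isoQ) ucn2_quotient_noncyclic.
have nsWG' : <[w]> <| G^`(1) by rewrite (normalS _ (der_sub 1 G)) ?cycle_subG.
rewrite (logn_card_quotient p nsWG') quotient_der ?normal_norm //.
by rewrite -orderE ow logn_prime ?eqxx.
Qed.

Lemma ucn2_not_sub_der1_center : ~~ ('Z_2(G) \subset G^`(1) <*> 'Z(G)).
Proof.
have [eqZ eqZ2 _ _] := ucn2_structure.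
have /andP[lt0D _] := logn_der1_center.
have cZG' : 'Z(G) \subset 'C(G^`(1)) by rewrite (subset_trans (subsetIr _ _)) ?centS ?der_sub.
have := congr1 (logn p) (mul_cardG G^`(1) 'Z(G)).
rewrite -cent_joinEr // !lognM ?cardG_gt0 // eqZ => eqN.
apply/negP=> /(logn_subG p); rewrite eqZ2; move: eqN logn_der1_le2 lt0D.
set lG' := logn p #|G^`(1)|; set lN := logn p #|G^`(1) <*> 'Z(G)|.
set lD := logn p #|G^`(1) :&: 'Z(G)|.
by clearbody lG' lN lD; clear -lG' lN lD; lia.
Qed.

Lemma ucn2_sub_maximal (M : {group gT}) :
  maximal M G -> 'Z(G) \subset M -> 'Z_2(G) \subset M.
Proof.
move=> maxM sZM; have [x Z2x [defM _]] := ucn2_witness maxM sZM.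
have [_ _ abZ2 _] := ucn2_structure.
by rewrite -defM subsetI ucn_sub sub_cent1 (subsetP abZ2).
Qed.

Lemma der1_center_quotient_abelem : p.-abelem (G / (G^`(1) <*> 'Z(G))).
Proof.
set N := G^`(1) <*> 'Z(G).
have nsNG : N <| G := normalY (der_normal 1 G) (center_normal G).
have nNG := normal_norm nsNG; have sZN : 'Z(G) \subset N := joing_subr _ _.
have abGN : abelian (G / N) := sub_der1_abelian (joing_subl _ _).
have pGN : p.-group (G / N) := quotient_pgroup N pG.
rewrite abelemE // abGN /=; apply: contraR nsubZG' => expGN.
have [gN GNg ogN] := exponent_witness (pgroup_nil pGN).
have [k ogNk] := p_natP (mem_p_elt pGN GNg).
have le2k : 2 <= k.
  by case: k ogNk => [|[|k]] // ogNk; move: expGN; rewrite ogN ogNk ?dvd1n ?expn1 ?dvdnn.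
apply/subsetP=> z Zz; have [eqZ _ _ _] := ucn2_structure.
have dvd_z : #[z] %| #[gN].
  rewrite (dvdn_trans (order_dvdG Zz)) // ogNk (card_pgroup (pgroupS (center_sub G) pG)).
  by rewrite eqZ dvdn_exp2l.
have [psi psi_gN sPsiz] := abelian_exponent_hom abGN GNg (esym ogN) dvd_z.
pose phi y := psi (coset N y).
have phiM : {in G &, {morph phi : x y / x * y}}.
  by move=> x y Gx Gy; rewrite /phi morphM ?(subsetP nNG) // morphM ?mem_quotient.
have phiZ : {in G, forall y, phi y \in 'Z(G)}.
  move=> y Gy; have GNy := mem_quotient N Gy.
  by rewrite (subsetP _ _ (subsetP sPsiz _ (mem_morphim psi GNy GNy))) ?cycle_subG.
have phi1 : {in 'Z(G), forall y, phi y = 1}.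
  by move=> y Zy; rewrite /phi coset_id ?(subsetP sZN) ?morph1.
have [x Gx commx] := AutcZ_inner_commg phiM phiZ phi1 AutcZ_inner.
have [g _ Gg defgN] := morphimP GNg.
by have := commx g Gg; rewrite /phi -defgN psi_gN => <-; rewrite derg1 mem_commg.
Qed.

Lemma ucn2_sub_der1_center : 'Z_2(G) \subset G^`(1) <*> 'Z(G).
Proof.
have nsNG := normalY (der_normal 1 G) (center_normal G).
apply: sub_maximal_abelem_quotient pG nsNG der1_center_quotient_abelem (ucn_sub 2 G) _.
by move=> M maxM /(subset_trans (joing_subr _ _)); apply: ucn2_sub_maximal.
Qed.

End InnerCentralAutomorphisms.

Theorem theorem2p3 (p : nat) (gT : finGroupType) (G : {group gT}) :
  prime p -> p.-group G -> #|G| <= p ^ 6 ->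
  ~~ ('Z(G) \subset G^`(1)) -> 3 <= nil_class G ->
  ~ ('Z(Inn G) = AutcZ G /\ AutcZ G \proper Autc G).
Proof.
move=> p_pr pG cardG nsubZG' class3 [defZInn _].
have AutcZ_inner : AutcZ G \subset Inn G by rewrite -defZInn center_sub.
have pD := pgroupS (subsetIr G^`(1) 'Z(G)) (pgroupS (center_sub G) pG).
have [_ p_dvd_D _] := pgroup_pdiv pD (der1_center_nontrivial pG class3).
have [w Dw ow] := Cauchy p_pr p_dvd_D.
have := ucn2_not_sub_der1_center p_pr pG cardG nsubZG' class3 AutcZ_inner Dw ow.
by rewrite (ucn2_sub_der1_center p_pr pG cardG nsubZG' class3 AutcZ_inner Dw ow).
Qed.
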